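(* Let $(\Omega,\mathcal F,(\mathcal F_t)_{t\ge0},\mathbb P)$ be a filtered probability space satisfying the usual conditions, $B$ an $(\mathcal F_t)$-adapted $d$-dimensional Brownian motion started at $0$, and let $\mathbf I=\{1,\dots,m\}$, $m\ge1$. For each $i\in\mathbf I$ let $\phi_i:\mathbb R\to(-\infty,+\infty]$ be convex and lower semicontinuous with $\phi_i=+\infty$ on $(-\infty,0)$ and $\phi_i$ of class $C^1$ on $(0,\infty)$; let $n_i$ be pairwise distinct unit vectors of $\mathbb R^d$ and $a_i\in\mathbb R$. Set $\Phi(x)=\sum_{i\in\mathbf I}\phi_i(x\cdot n_i-a_i)$, $D=\{x: x\cdot n_i>a_i\ \forall i\}$, assumed nonempty, so $\overline D=\{x:x\cdot n_i\ge a_i\ \forall i\}$. Let $(X,L)$ be the solution of the multivalued SDE associated with $\Phi$ (see context) with $\mathcal F_0$-measurable initial condition $X_0\in\overline D$, and set $U^i_t=X_t\cdot n_i-a_i$. Then for every $i\in\mathbf I$ and every $0<t<\infty$, almost surely $$\int_0^t|\phi_i'(U^i_s)|\,ds<\infty.$$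
   Context: A unit vector $n(x)$ is a unit inward normal to $D$ at $x\in\partial D$ if $n(x)\cdot(x-z)\le0$ for all $z\in\overline D$. The solution of the multivalued SDE associated with $\Phi$ (which exists and is unique) is the pair consisting of a continuous $(\mathcal F_t)$-adapted $\overline D$-valued process $X$ and a continuous $(\mathcal F_t)$-adapted nondecreasing process $L$ such that for all $t\ge0$: $X_t=X_0+B_t-\int_0^t\nabla\Phi(X_s)\,ds+\int_0^t n_s\,dL_s$ and $L_t=\int_0^t\mathbf 1_{\{X_s\in\partial D\}}dL_s$, where $n_s$ is $dL_s$-a.e. a unit inward normal to $D$ at $X_s$; here $\nabla\Phi(x)=\sum_i n_i\phi_i'(x\cdot n_i-a_i)$ on $D$. This solution also satisfies $\int_0^T\mathbf 1_{\{X_s\in\partial D\}}ds=0$ and $\int_0^T|\nabla\Phi(X_s)|ds<\infty$ for all $T<\infty$. *)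

From HB Require Import structures.
From mathcomp Require Import all_boot all_order all_algebra.
From mathcomp Require Import all_classical all_reals all_analysis.
Set Implicit Arguments. Unset Strict Implicit. Unset Printing Implicit Defensive.
Import Order.TTheory GRing.Theory Num.Theory.
Import numFieldNormedType.Exports.
Local Open Scope classical_set_scope.
Local Open Scope ring_scope.

Section Defs.
Context {R : realType}.

Definition dot {d : nat} (x y : 'rV[R]_d) : R := \sum_(k < d) x 0 k * y 0 k.

Definition econvex (f : R -> \bar R) : Prop :=
  forall x y l : R, 0 < l -> l < 1 ->
    (f (l * x + (1 - l) * y)%R <= l%:E * f x + (1 - l)%:E * f y)%E.

Definition admissible_phi (f : R -> \bar R) : Prop :=
  [/\ econvex f,
      lower_semicontinuous f,
      (forall u, u < 0 -> f u = +oo%E)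
    & exists g : R -> R,
        [/\ (forall u, 0 < u -> f u = (g u)%:E),
            (forall u, 0 < u -> derivable g u 1)
          & {in `]0, +oo[, continuous (derive1 g)}]].

(* phi' : the derivative of phi on (0,+oo); by convention 0 on (-oo,0]
   (these points are irrelevant: the solution spends zero Lebesgue time on the boundary) *)
Definition dphi (f : R -> \bar R) (u : R) : R :=
  if 0 < u then derive1 (fine \o f) u else 0.

Definition Dset {d m : nat} (nv : 'I_m -> 'rV[R]_d) (a : 'I_m -> R) : set 'rV[R]_d :=
  [set x | forall i, a i < dot x (nv i)].
Definition Dbar {d m : nat} (nv : 'I_m -> 'rV[R]_d) (a : 'I_m -> R) : set 'rV[R]_d :=
  [set x | forall i, a i <= dot x (nv i)].
Definition bdry {d m : nat} (nv : 'I_m -> 'rV[R]_d) (a : 'I_m -> R) : set 'rV[R]_d :=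
  Dbar nv a `\` Dset nv a.

Definition inward_normal {d m : nat} (nv : 'I_m -> 'rV[R]_d) (a : 'I_m -> R)
  (x v : 'rV[R]_d) : Prop :=
  dot v v = 1 /\ forall z, Dbar nv a z -> dot v (x - z) <= 0.

Definition gradPhi {d m : nat} (phi : 'I_m -> R -> \bar R) (nv : 'I_m -> 'rV[R]_d)
  (a : 'I_m -> R) (x : 'rV[R]_d) : 'rV[R]_d :=
  \sum_(i < m) dphi (phi i) (dot x (nv i) - a i) *: nv i.

Context {dO : measure_display} {Omega : measurableType dO}.

Definition usual_filtration (P : probability Omega R) (F : R -> set (set Omega)) : Prop :=
  [/\ (forall t, 0 <= t -> sigma_algebra setT (F t)),
      (forall t, 0 <= t -> F t `<=` measurable),
      (forall s t, 0 <= s -> s <= t -> F s `<=` F t),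
      (forall N, (exists N', [/\ measurable N', P N' = 0%E & N `<=` N']) -> F 0 N)
    &
      (forall t, 0 <= t -> \bigcap_(s in `]t, +oo[) F s `<=` F t)].

Definition adapted (F : R -> set (set Omega)) (Y : R -> Omega -> R) : Prop :=
  forall t, 0 <= t -> forall E : set R, measurable E -> F t (Y t @^-1` E).

(* (F_t)-Brownian motion in R^d started at 0: continuous paths, adapted, and for
   s < t the increment B_t - B_s is independent of F_s with law N(0, (t-s) I_d)
   (expressed as the product rule on F_s-events times Borel rectangles). *)
Definition brownian {d : nat} (P : probability Omega R) (F : R -> set (set Omega))
  (B : R -> Omega -> 'rV[R]_d) : Prop :=
  [/\ (forall w, B 0 w = 0),
      (forall w (k : 'I_d), {within `[0, +oo[, continuous (fun t => B t w 0 k)}),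
      (forall k : 'I_d, adapted F (fun t w => B t w 0 k))
    & (forall s t, 0 <= s -> s < t -> forall A, F s A ->
        forall E : 'I_d -> set R, (forall k, measurable (E k)) ->
        P (A `&` [set w | forall k, E k (B t w 0 k - B s w 0 k)]) =
        (P A * \prod_(k < d) normal_prob 0 (Num.sqrt (t - s)) (E k))%E)].

Definition mSDE_solution {d m : nat} (P : probability Omega R) (F : R -> set (set Omega))
  (B : R -> Omega -> 'rV[R]_d) (phi : 'I_m -> R -> \bar R) (nv : 'I_m -> 'rV[R]_d)
  (a : 'I_m -> R) (X : R -> Omega -> 'rV[R]_d) (L : Omega -> cumulative R R) : Prop :=
  [/\ (* X continuous, adapted (so X_0 is F_0-measurable), Dbar-valued *)
      (forall w (k : 'I_d), {within `[0, +oo[, continuous (fun t => X t w 0 k)}),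
      (forall k : 'I_d, adapted F (fun t w => X t w 0 k)),
      (forall t w, 0 <= t -> Dbar nv a (X t w)),
      ((forall w, continuous (L w) /\ forall s, s <= 0 -> L w s = 0) /\
       adapted F (fun t w => L w t))
    & exists n : R -> Omega -> 'rV[R]_d,
        (forall w (k : 'I_d), measurable_fun setT (fun s => n s w 0 k)) /\
        {ae P, forall w, forall t : R, 0 <= t ->
          [/\ (\int[lebesgue_measure]_(s in `[0%R, t])
                  (Num.sqrt (dot (gradPhi phi nv a (X s w)) (gradPhi phi nv a (X s w))))%:E
                < +oo)%E,
              (\int[lebesgue_measure]_(s in `[0%R, t]) (\1_(bdry nv a) (X s w))%:E = 0)%E,
              (forall k : 'I_d,
                X t w 0 k = X 0 w 0 k + B t w 0 k
                  - Rintegral lebesgue_measure `[0%R, t] (fun s => gradPhi phi nv a (X s w) 0 k)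
                  + Rintegral (lebesgue_stieltjes_measure (L w)) `[0%R, t] (fun s => n s w 0 k)),
              L w t = Rintegral (lebesgue_stieltjes_measure (L w)) `[0%R, t]
                        (fun s => \1_(bdry nv a) (X s w))
            & {ae lebesgue_stieltjes_measure (L w), forall s, 0 <= s ->
                 inward_normal nv a (X s w) (n s w)}]}].

End Defs.

From HB Require Import structures.
From mathcomp Require Import all_boot all_order all_algebra.
From mathcomp Require Import all_classical all_reals all_analysis.
From mathcomp Require Import ring lra measurable_realfun.
Set Implicit Arguments. Unset Strict Implicit. Unset Printing Implicit Defensive.
Import Order.TTheory GRing.Theory Num.Theory.
Import numFieldNormedType.Exports.
Local Open Scope classical_set_scope.
Local Open Scope ring_scope.

(* Fix [y0] in [D] and put [c_j = y0.n_j - a_j > 0], [u_j = x.n_j - a_j].  Pairing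
   [grad Phi(x)] with [x - y0] gives
     [sum_j phi_j'(u_j) (u_j - c_j) = (x - y0).grad Phi(x) <= |x - y0| |grad Phi(x)|].
   Since [phi_j'] is nondecreasing, each summand is at least [c_j/2 |phi_j'(u_j)|]
   minus a constant depending only on a bound for [u_j].  A continuous path stays
   bounded on [[0, t]], so along it [|phi_i'(U^i_s)| <= K1 + K2 |grad Phi(X_s)|],
   and the right-hand side is integrable on [[0, t]] by definition of a solution. *)

Section convex_derivative.
Context {R : realType}.
Implicit Types (g : R -> R) (l u x y z : R).

Definition convex_on_pos g := forall x y l, 0 < x -> 0 < y -> 0 < l -> l < 1 ->
  g (l * x + (1 - l) * y) <= l * g x + (1 - l) * g y.

Lemma derive1_cvg_dnbhs g u : derivable g u 1 ->
  (fun h => h^-1 * (g (h + u) - g u)) @ 0^' --> derive1 g u.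
Proof.
rewrite /derivable /derive1.
have -> : (fun h : R => h^-1 *: (g (h *: 1 + u) - g u)) =
          (fun h => h^-1 * (g (h + u) - g u)).
  by apply/funext => h; rewrite /GRing.scale /= mulr1.
by [].
Qed.

Lemma convex_chord g u z l : convex_on_pos g -> 0 < u -> 0 < z -> 0 < l -> l < 1 ->
  g (l * (z - u) + u) - g u <= l * (g z - g u).
Proof.
move=> cg u0 z0 l0 l1; have := cg z u l z0 u0 l0 l1.
have -> : l * z + (1 - l) * u = l * (z - u) + u by ring.
lra.
Qed.

Lemma convex_slope_le g u z h : convex_on_pos g -> 0 < u -> 0 < z ->
  0 < h / (z - u) -> h / (z - u) < 1 ->
  h^-1 * (g (h + u) - g u) * (z - u) <= g z - g u.
Proof.
move=> cg u0 z0 l0 l1.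
have zu0 : z - u != 0 by apply: contraTneq l0 => ->; rewrite invr0 mulr0 ltxx.
have h0 : h != 0 by apply: contraTneq l0 => ->; rewrite mul0r ltxx.
have -> : h^-1 * (g (h + u) - g u) * (z - u) = (h / (z - u))^-1 * (g (h + u) - g u).
  by rewrite invf_div; field.
by rewrite ler_pdivrMl // -{1}(divfK zu0 h) convex_chord.
Qed.

Lemma convex_tangent g u z : convex_on_pos g -> 0 < u -> 0 < z ->
  derivable g u 1 -> derive1 g u * (z - u) <= g z - g u.
Proof.
move=> cg u0 z0 dg.
have cvq : (fun h => h^-1 * (g (h + u) - g u) * (z - u)) @ 0^' --> derive1 g u * (z - u).
  exact: cvgM (derive1_cvg_dnbhs dg) (cvg_cst _).
have [zu|zu|<-] := ltgtP z u; last by rewrite !subrr mulr0.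
- have zu0 : z - u < 0 by rewrite subr_lt0.
  apply: (cvgr_to_le (cvg_dnbhs_at_left cvq)); near=> h.
  apply: convex_slope_le; rewrite // ?ltr_ndivlMr ?ltr_ndivrMr // ?mul0r ?mul1r.
  + by near: h; exact: nbhs_left_lt.
  + by near: h; apply: nbhs_left_gt.
- have zu0 : 0 < z - u by rewrite subr_gt0.
  apply: (cvgr_to_le (cvg_dnbhs_at_right cvq)); near=> h.
  apply: convex_slope_le; rewrite // ?ltr_pdivlMr ?ltr_pdivrMr // ?mul0r ?mul1r.
  + by near: h; exact: nbhs_right_gt.
  + by near: h; apply: nbhs_right_lt.
Unshelve. all: by end_near.
Qed.

Lemma convex_derive1_le g x y : convex_on_pos g -> 0 < x -> x <= y ->
  derivable g x 1 -> derivable g y 1 -> derive1 g x <= derive1 g y.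
Proof.
move=> cg x0 xy dgx dgy; have y0 : 0 < y by apply: lt_le_trans xy.
have [<-//|xy'] := eqVneq x y.
have yx0 : 0 < y - x by rewrite subr_gt0 lt_neqAle xy' xy.
have := convex_tangent cg x0 y0 dgx; have := convex_tangent cg y0 x0 dgy.
move=> tyx txy; rewrite -(ler_pM2r yx0); nra.
Qed.

End convex_derivative.

Section admissible_potential.
Context {R : realType}.
Implicit Types (f : R -> \bar R) (u x y : R).

Lemma admissible_phi_finite_part f : admissible_phi f ->
  exists g : R -> R, [/\ forall u, 0 < u -> derivable g u 1,
    {in `]0, +oo[, continuous (derive1 g)}, convex_on_pos g
    & forall u, 0 < u -> dphi f u = derive1 g u].
Proof.
case=> cf _ _ [g [fg dg cg]]; exists g; split => //.
- move=> x y l x0 y0 l0 l1.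
  have xy0 : 0 < l * x + (1 - l) * y by rewrite addr_gt0 // mulr_gt0 // subr_gt0.
  by have := cf x y l l0 l1; rewrite !fg // -!EFinM -EFinD lee_fin.
- move=> u u0; rewrite /dphi u0 !derive1E; apply: near_eq_derive.
  by near=> x; rewrite /= fg //; near: x; exact: lt_nbhsr.
Unshelve. all: by end_near.
Qed.

Lemma dphi_le0 f u : u <= 0 -> dphi f u = 0.
Proof. by rewrite /dphi => /le_gtF ->. Qed.

Lemma le_dphi f x y : admissible_phi f -> 0 < x -> x <= y -> dphi f x <= dphi f y.
Proof.
move=> /admissible_phi_finite_part [g [dg _ cg dE]] x0 xy.
have y0 : 0 < y by apply: lt_le_trans xy.
by rewrite !dE //; exact: convex_derive1_le cg x0 xy (dg _ x0) (dg _ y0).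
Qed.

Lemma measurable_dphi f : admissible_phi f -> measurable_fun setT (dphi f).
Proof.
move=> /admissible_phi_finite_part [g [_ cg _ dE]].
have mg : measurable_fun (`]0, +oo[ : set R) (derive1 g).
  by apply: open_continuous_measurable_fun => // u; rewrite inE; exact: cg.
apply: eq_measurable_fun _ _ ((measurable_restrictT _ (measurable_itv _)).1 mg) => u _.
rewrite patchE /dphi mem_setE in_itv /= andbT.
by case: ifPn => // u0; rewrite -dE // /dphi u0.
Qed.

Lemma normr_le_bounds (x lo hi : R) : lo <= x -> x <= hi -> `|x| <= `|lo| + `|hi|.
Proof.
move=> lox xhi; have := ler_norm hi; have := ler_norm (- lo); rewrite normrN.
have := normr_ge0 lo; have := normr_ge0 hi; case: (ler0P x) => x0; lra.
Qed.

(* On [[0, U]], [phi'(u) (u - c)] is bounded below by [c/2 |phi'(u)|] up to a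
   constant: for [u <= c/2] the sign of [phi'] helps, elsewhere [phi'] is
   bounded by monotonicity. *)
Lemma dphi_mulB_lbound f (c U u : R) : admissible_phi f -> 0 < c -> 0 <= u -> u <= U ->
  `|dphi f u| * (c / 2) - (`|dphi f (c / 2)| + `|dphi f (U + c)|) * (U + 2 * c)
    <= dphi f u * (u - c).
Proof.
move=> af c0 u0 uU; set h := dphi f.
set Q := `|h (c / 2)| + `|h (U + c)|.
have Q0 : 0 <= Q by rewrite addr_ge0.
have bounded : `|h u| <= Q -> `|h u| * (c / 2) - Q * (U + 2 * c) <= h u * (u - c).
  move=> huQ; have : `|h u * (u - c)| <= Q * (U + c).
    by rewrite normrM ler_pM // ler_norml; apply/andP; split; lra.
  move=> /lerNnormlW; nra.
have [uc|uc] := leP u (c / 2).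
- have [hu0|hu0] := leP (h u) 0; first by rewrite ler0_norm //; nra.
  have upos : 0 < u by rewrite lt_neqAle u0 andbT; apply: contraTneq hu0 => <-;
    rewrite /h dphi_le0 // ltxx.
  apply: bounded; rewrite gtr0_norm //; apply: le_trans (le_dphi af upos uc) _.
  by apply: le_trans (ler_norm _) _; rewrite lerDl.
- have c2 : 0 < c / 2 by rewrite divr_gt0.
  have upos : 0 < u by apply: lt_trans uc.
  apply: bounded; apply: normr_le_bounds.
  + exact: le_dphi af c2 (ltW uc).
  + by apply: le_dphi af upos _; lra.
Qed.

End admissible_potential.

Section dot_product.
Context {R : realType} {d : nat}.
Implicit Types x y z : 'rV[R]_d.

Lemma dotBl x y z : dot (x - y) z = dot x z - dot y z.
Proof. by rewrite /dot -sumrB; apply: eq_bigr => k _; rewrite !mxE mulrBl. Qed.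

Lemma dot_sumZr m x (c : 'I_m -> R) (v : 'I_m -> 'rV[R]_d) :
  dot x (\sum_(j < m) c j *: v j) = \sum_(j < m) c j * dot x (v j).
Proof.
rewrite /dot; under eq_bigr => k _ do rewrite summxE mulr_sumr.
rewrite exchange_big /=; apply: eq_bigr => j _; rewrite mulr_sumr.
by apply: eq_bigr => k _; rewrite mxE mulrCA.
Qed.

Lemma dot_self_ge0 x : 0 <= dot x x.
Proof. by rewrite /dot sumr_ge0 // => k _; rewrite -expr2 sqr_ge0. Qed.

Lemma normr_coord_le x k : `|x 0 k| <= Num.sqrt (dot x x).
Proof.
rewrite -sqrtr_sqr ler_sqrt ?dot_self_ge0 // /dot (bigD1 k) //= -expr2 lerDl.
by rewrite sumr_ge0 // => l _; rewrite -expr2 sqr_ge0.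
Qed.

Lemma normr_dot_le x y : `|dot x y| <= \sum_k `|x 0 k| * `|y 0 k|.
Proof.
by apply: le_trans (ler_norm_sum _ _ _) _; apply: ler_sum => k _; rewrite normrM.
Qed.

End dot_product.

Section polyhedral_potential.
Context {R : realType} {d m : nat}.
Variables (phi : 'I_m -> R -> \bar R) (nv : 'I_m -> 'rV[R]_d) (a : 'I_m -> R).
Hypothesis adm : forall j, admissible_phi (phi j).

Lemma dot_gradPhi x y : dot (x - y) (gradPhi phi nv a x) =
  \sum_j dphi (phi j) (dot x (nv j) - a j) *
         ((dot x (nv j) - a j) - (dot y (nv j) - a j)).
Proof.
rewrite /gradPhi dot_sumZr; apply: eq_bigr => j _.
by rewrite dotBl; congr (_ * _); ring.
Qed.

Lemma dphi_le_norm_gradPhi i (M : R) : Dset nv a !=set0 -> 0 <= M ->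
  exists K1 K2 : R, [/\ 0 <= K1, 0 <= K2 & forall x, Dbar nv a x ->
    (forall k, `|x 0 k| <= M) ->
    `|dphi (phi i) (dot x (nv i) - a i)| <=
      K1 + K2 * Num.sqrt (dot (gradPhi phi nv a x) (gradPhi phi nv a x))].
Proof.
move=> [y0 Dy0] M0.
pose c j := dot y0 (nv j) - a j.
have c0 j : 0 < c j by rewrite subr_gt0; exact: Dy0.
pose U j := \sum_k M * `|nv j 0 k| + `|a j|.
pose C j := (`|dphi (phi j) (c j / 2)| + `|dphi (phi j) (U j + c j)|) * (U j + 2 * c j).
have U0 j : 0 <= U j by rewrite addr_ge0 // sumr_ge0 // => k _; rewrite mulr_ge0.
have C0 j : 0 <= C j.
  by apply: mulr_ge0; rewrite addr_ge0 // mulr_ge0 // ltW.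
pose Ky := \sum_k (`|y0 0 k| + M).
have Ky0 : 0 <= Ky by rewrite sumr_ge0 // => k _; rewrite addr_ge0.
have ci2 : 0 < 2 / c i by rewrite divr_gt0.
exists ((\sum_j C j) * (2 / c i)), (Ky * (2 / c i)).
split; [by rewrite mulr_ge0 ?sumr_ge0 // ltW | by rewrite mulr_ge0 // ltW |].
move=> x Dx xM.
set G := gradPhi phi nv a x; set h := fun j => dphi (phi j) (dot x (nv j) - a j).
have term j : `|h j| * (c j / 2) - C j <= h j * ((dot x (nv j) - a j) - c j).
  apply: dphi_mulB_lbound; rewrite ?subr_ge0 //.
  apply: lerD; last by rewrite -normrN ler_norm.
  apply: le_trans (ler_norm _) _; apply: le_trans (normr_dot_le _ _) _.
  by apply: ler_sum => k _; rewrite ler_wpM2r.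
have pairing : dot (x - y0) G <= Ky * Num.sqrt (dot G G).
  apply: le_trans (ler_norm _) _; apply: le_trans (normr_dot_le _ _) _.
  rewrite mulr_suml; apply: ler_sum => k _; apply: ler_pM => //.
    by rewrite !mxE; apply: le_trans (ler_normB _ _) _; rewrite addrC lerD.
  exact: normr_coord_le.
have hi : `|h i| * (c i / 2) <= \sum_j `|h j| * (c j / 2).
  rewrite (bigD1 i) //= lerDl sumr_ge0 // => j _.
  by rewrite mulr_ge0 // divr_ge0 // ltW.
have sum_le : \sum_j (`|h j| * (c j / 2) - C j) <= dot (x - y0) G.
  rewrite dot_gradPhi; apply: ler_sum => j _; exact: term.
rewrite sumrB in sum_le.
have -> : `|h i| = `|h i| * (c i / 2) * (2 / c i) by field; rewrite gt_eqF.
have bound : `|h i| * (c i / 2) <= \sum_j C j + Ky * Num.sqrt (dot G G) by lra.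
by apply: le_trans (ler_wpM2r (ltW ci2) bound) _; rewrite mulrDl mulrAC.
Qed.

Section measurability.
Context {dT : measure_display} {T : measurableType dT} (D : set T) (Y : T -> 'rV[R]_d).
Hypothesis mY : forall k, measurable_fun D (fun s => Y s 0 k).

Lemma measurable_dphi_coord j :
  measurable_fun D (fun s => dphi (phi j) (dot (Y s) (nv j) - a j)).
Proof.
apply: measurableT_comp (measurable_dphi (adm j)) _.
apply: measurable_funB => //; apply: measurable_sum => k.
exact: measurable_funM.
Qed.

Lemma measurable_norm_gradPhi :
  measurable_fun D (fun s => Num.sqrt (dot (gradPhi phi nv a (Y s)) (gradPhi phi nv a (Y s)))).
Proof.
have mG k : measurable_fun D (fun s => gradPhi phi nv a (Y s) 0 k).
  apply: (eq_measurable_fun (fun s => \sum_j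
    dphi (phi j) (dot (Y s) (nv j) - a j) * nv j 0 k)) => [s _|].
    by rewrite /gradPhi summxE; apply: eq_bigr => j _; rewrite mxE.
  by apply: measurable_sum => j; apply: measurable_funM => //; exact: measurable_dphi_coord.
apply: measurableT_comp (continuous_measurable_fun (@sqrt_continuous R)) _.
by apply: measurable_sum => k; exact: measurable_funM.
Qed.

End measurability.

End polyhedral_potential.

Section continuous_paths.
Context {R : realType}.

Lemma segment_continuous_bounded (f : R -> R) (a b : R) :
  {within `[a, b], continuous f} -> exists2 M, 0 <= M &
    forall s, s \in `[a, b] -> `|f s| <= M.
Proof.
move=> cf.
have [M0 [_ HM]] := compact_bounded (continuous_compact cf (@segment_compact R a b)).
exists (`|M0| + 1); first by rewrite addr_ge0.
move=> s; rewrite inE => sab; apply: (HM (`|M0| + 1)) => /=.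
  by apply: le_lt_trans (ler_norm _) _; rewrite ltrDl.
by exists s.
Qed.

Lemma segment_continuous_row_bounded d (Y : R -> 'rV[R]_d) (a b : R) :
  (forall k, {within `[a, b], continuous (fun s => Y s 0 k)}) -> exists2 M, 0 <= M &
    forall s k, s \in `[a, b] -> `|Y s 0 k| <= M.
Proof.
move=> cY.
have /choice[Mk YMk] : forall k, exists M, 0 <= M /\
    forall s, s \in `[a, b] -> `|Y s 0 k| <= M.
  by move=> k; have [M M0 YM] := segment_continuous_bounded (cY k); exists M.
have Mk0 k : 0 <= Mk k by case: (YMk k).
exists (\sum_k Mk k) => [|s k sab]; first exact: sumr_ge0.
have [_ /(_ s sab) YMks] := YMk k; apply: le_trans YMks _.
by rewrite (bigD1 k) //= lerDl sumr_ge0.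
Qed.
End continuous_paths.

Lemma integral_normr_lty_affine_bound (R : realType) (dT : measure_display)
    (T : measurableType dT) (mu : {measure set T -> \bar R}) (D : set T)
    (f g : T -> R) (K1 K2 : R) :
  measurable D -> (mu D < +oo)%E -> 0 <= K1 -> 0 <= K2 ->
  measurable_fun D f -> measurable_fun D g -> (forall x, D x -> 0 <= g x) ->
  (forall x, D x -> `|f x| <= K1 + K2 * g x) ->
  (\int[mu]_(x in D) (g x)%:E < +oo)%E -> (\int[mu]_(x in D) `|f x|%:E < +oo)%E.
Proof.
move=> mD muD K10 K20 mf mg g0 fg gfin.
have mgE : measurable_fun D (fun x => (g x)%:E) by exact/measurable_EFinP.
apply: (@le_lt_trans _ _ (\int[mu]_(x in D) (K1%:E + K2%:E * (g x)%:E))%E).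
  apply: ge0_le_integral => //.
  - by apply/measurable_EFinP; exact: measurableT_comp.
  - by apply: emeasurable_funD => //; exact: emeasurable_funM.
have K2g0 x : D x -> (0 <= K2%:E * (g x)%:E)%E by move=> Dx; rewrite mule_ge0 ?lee_fin ?g0.
rewrite ge0_integralD // ?integral_cst // ?ge0_integralZl_EFin //.
  by rewrite lte_add_pinfty // lte_mul_pinfty.
exact: emeasurable_funM.
Qed.

Theorem lemma2 (R : realType) (d m : nat) (dO : measure_display)
  (Omega : measurableType dO) (P : probability Omega R) (F : R -> set (set Omega))
  (B : R -> Omega -> 'rV[R]_d) (phi : 'I_m -> R -> \bar R) (nv : 'I_m -> 'rV[R]_d)
  (a : 'I_m -> R) (X : R -> Omega -> 'rV[R]_d) (L : Omega -> cumulative R R) :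
  (0 < m)%N ->
  usual_filtration P F ->
  brownian P F B ->
  (forall i, admissible_phi (phi i)) ->
  injective nv ->
  (forall i, dot (nv i) (nv i) = 1) ->
  Dset nv a !=set0 ->
  mSDE_solution P F B phi nv a X L ->
  forall (i : 'I_m) (t : R), 0 < t ->
    {ae P, forall w, (\int[lebesgue_measure]_(s in `[0%R, t])
                        (`|dphi (phi i) (dot (X s w) (nv i) - a i)|)%:E < +oo)%E}.
Proof.
move=> _ _ _ adm _ _ D0 [Xc _ XD _ [n [_ sol]]] i t t0.
apply: filterS sol => w /(_ t (ltW t0)) [grad_fin _ _ _ _].
have cX k : {within `[0, t], continuous (fun s => X s w 0 k)}.
  by apply: continuous_subspaceW (Xc w k) => s /=; rewrite !in_itv /= => /andP[->].
have [M M0 XM] := segment_continuous_row_bounded cX.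
have [K1 [K2 [K10 K20 dphi_le]]] := dphi_le_norm_gradPhi adm i D0 M0.
have mX k : measurable_fun `[0%R, t] (fun s => X s w 0 k).
  exact: subspace_continuous_measurable_fun (cX k).
have segment_fin : (lebesgue_measure (`[0%R, t] : set R) < +oo)%E.
  by rewrite lebesgue_measure_itv /= lte_fin t0 -EFinD ltry.
apply: integral_normr_lty_affine_bound K10 K20 _ _ _ _ grad_fin.
- exact: measurable_itv.
- exact: segment_fin.
- exact: measurable_dphi_coord.
- exact: measurable_norm_gradPhi.
- by move=> s _; exact: sqrtr_ge0.
- move=> s s0t; apply: dphi_le => [|k]; last by apply: XM; rewrite inE.
  by apply: XD; move: s0t; rewrite /= in_itv /= => /andP[].
Qed.
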